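(* Let $\mathbf C$ be an admissible category of lattices. Then the functor $\mathbb P:\mathbf{Conv}\to(\mathbf C^{\mathrm{conv}})^{op}$ is left adjoint to the functor $\mathrm{pt}:(\mathbf C^{\mathrm{conv}})^{op}\to\mathbf{Conv}$; that is, $\mathbb P\dashv\mathrm{pt}$ is an adjunction between $\mathbf{Conv}$ and $(\mathbf C^{\mathrm{conv}})^{op}$.
   Context: An inf-semilattice is a poset with all finite infima (including a top element $\top$). A filter on an inf-semilattice $L$ is a non-empty upward-closed subset of $L$ closed under binary meets; $L$ itself counts as a filter. $\mathbb F L$ is the set of filters on $L$, ordered by inclusion. For a set $X$, $\mathbb P(X)$ is its powerset ordered by inclusion; filters on $\mathbb P(X)$ are called filters of subsets of $X$. Let $\mathbf C$ be a category whose objects are inf-semilattices. A convergence $\mathbf C$-object is a pair $(L,\lim_L)$ where $L$ is a $\mathbf C$-object and $\lim_L:\mathbb F L\to L$ is monotone. The category $\mathbf C^{\mathrm{conv}}$ has these as objects; its morphisms $\varphi:L\to L'$ are the $\mathbf C$-morphisms that are continuous: $\lim_{L'}\mathcal F\le\varphi(\lim_L\varphi^{-1}(\mathcal F))$ for every $\mathcal F\in\mathbb F L'$. $\mathbf C$ is a category of lattices if all its objects are lattices and all its morphisms preserve finite suprema and finite infima. $\mathbf C$ is admissible if $\mathbb P(X)$ is a $\mathbf C$-object for every set $X$, and there are two classes of index sets $\mathcal I,\mathcal J$ such that for all $\mathbf C$-objects $L,L'$ the $\mathbf C$-morphisms $L\to L'$ are exactly the monotone maps preserving all $I$-indexed infima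 existing in $L$ ($I\in\mathcal I$) and all $J$-indexed suprema existing in $L$ ($J\in\mathcal J$). A convergence space is a set $X$ with a relation $\to$ between filters of subsets of $X$ and points of $X$ such that $\dot x\to x$ for all $x$, where $\dot x=\{S\subseteq X: x\in S\}$, and $\mathcal F\to x$, $\mathcal F\subseteq\mathcal G$ imply $\mathcal G\to x$. A map $f:X\to Y$ is continuous if $\mathcal F\to x$ implies $f[\mathcal F]\to f(x)$, where $f[\mathcal F]=\{B\subseteq Y: f^{-1}(B)\in\mathcal F\}$. These form the category $\mathbf{Conv}$. The functor $\mathbb P$ sends a convergence space $X$ to $(\mathbb P(X),\lim_{\mathbb P(X)})$ with $\lim_{\mathbb P(X)}\mathcal F=\{x\in X:\mathcal F\to x\}$, and a continuous map $f$ to $f^{-1}$. Points: let $1=\{*\}$ and $\mathbb P(1)=\{\emptyset,1\}$ with $\lim_{\mathbb P(1)}$ constantly equal to $1$. For a convergence $\mathbf C$-object $L$, $\mathrm{pt}\,L$ is the set of morphisms $L\to\mathbb P(1)$ in $\mathbf C^{\mathrm{conv}}$. For $\ell\in L$ let $\ell^\bullet=\{\varphi\in\mathrm{pt}\,L:\varphi(\ell)=1\}$; for a filter $\mathcal F$ of subsets of $\mathrm{pt}\,L$ let $\mathcal F^\circ=\{\ell\in L:\ell^\bullet\in\mathcal F\}$. The convergence on $\mathrm{pt}\,L$ is: $\mathcal F\to\varphi$ iff $\varphi\in(\lim_L\mathcal F^\circ)^\bullet$. On a morphism $\varphi:L\to L'$ of $\mathbf C^{\mathrm{conv}}$, $\mathrm{pt}\,\varphi:\mathrm{pt}\,L'\to\mathrm{pt}\,L$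 is $\psi\mapsto\psi\circ\varphi$. *)

Set Implicit Arguments.

Record OrdStruct := { ocar : Type; ole : ocar -> ocar -> Prop }.

Definition is_lb (L : OrdStruct) (S : ocar L -> Prop) (m : ocar L) :=
  forall s, S s -> ole L m s.
Definition is_ub (L : OrdStruct) (S : ocar L -> Prop) (m : ocar L) :=
  forall s, S s -> ole L s m.
Definition is_glb (L : OrdStruct) (S : ocar L -> Prop) (m : ocar L) :=
  is_lb L S m /\ forall m', is_lb L S m' -> ole L m' m.
Definition is_lub (L : OrdStruct) (S : ocar L -> Prop) (m : ocar L) :=
  is_ub L S m /\ forall m', is_ub L S m' -> ole L m m'.

Definition pairset (L : OrdStruct) (a b : ocar L) : ocar L -> Prop :=
  fun x => x = a \/ x = b.
Definition emptyset (L : OrdStruct) : ocar L -> Prop := fun _ => False.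

Definition IsPoset (L : OrdStruct) :=
  (forall a, ole L a a) /\
  (forall a b c, ole L a b -> ole L b c -> ole L a c) /\
  (forall a b, ole L a b -> ole L b a -> a = b).

Definition IsLattice (L : OrdStruct) :=
  IsPoset L /\
  (forall a b, exists m, is_glb L (pairset L a b) m) /\
  (forall a b, exists m, is_lub L (pairset L a b) m) /\
  (exists t, is_glb L (emptyset L) t) /\
  (exists z, is_lub L (emptyset L) z).

Definition range (L : OrdStruct) (I : Type) (f : I -> ocar L) : ocar L -> Prop :=
  fun y => exists i, f i = y.

Definition Monotone (L L' : OrdStruct) (phi : ocar L -> ocar L') :=
  forall a b, ole L a b -> ole L' (phi a) (phi b).

Definition PresInf (I : Type) (L L' : OrdStruct) (phi : ocar L -> ocar L') :=
  forall (f : I -> ocar L) (m : ocar L),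
    is_glb L (range L f) m -> is_glb L' (range L' (fun i => phi (f i))) (phi m).
Definition PresSup (I : Type) (L L' : OrdStruct) (phi : ocar L -> ocar L') :=
  forall (f : I -> ocar L) (m : ocar L),
    is_lub L (range L f) m -> is_lub L' (range L' (fun i => phi (f i))) (phi m).

Definition PresFinInfSup (L L' : OrdStruct) (phi : ocar L -> ocar L') :=
  forall n : nat, PresInf {i : nat | i < n} L L' phi /\ PresSup {i : nat | i < n} L L' phi.

(* morphisms of the admissible category C determined by the index-set classes II, JJ *)
Definition CMor (II JJ : Type -> Prop) (L L' : OrdStruct) (phi : ocar L -> ocar L') :=
  Monotone L L' phi /\
  (forall I : Type, II I -> PresInf I L L' phi) /\
  (forall J : Type, JJ J -> PresSup J L L' phi).

Definition PowOrd (X : Type) : OrdStruct :=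
  {| ocar := X -> Prop; ole := fun A B => forall x, A x -> B x |}.

Definition IsFilter (L : OrdStruct) (F : ocar L -> Prop) :=
  (exists a, F a) /\
  (forall a b, F a -> ole L a b -> F b) /\
  (forall a b m, F a -> F b -> is_glb L (pairset L a b) m -> F m).

Definition Incl (T : Type) (F G : T -> Prop) := forall t, F t -> G t.

Record CObjRaw := { clat : OrdStruct; clim : (ocar clat -> Prop) -> ocar clat }.

Definition IsConvCObj (CObj : OrdStruct -> Prop) (L : CObjRaw) :=
  CObj (clat L) /\
  forall F G, IsFilter (clat L) F -> IsFilter (clat L) G -> Incl F G ->
    ole (clat L) (clim L F) (clim L G).

Definition CconvMor (II JJ : Type -> Prop) (L L' : CObjRaw)
    (phi : ocar (clat L) -> ocar (clat L')) :=
  CMor II JJ (clat L) (clat L') phi /\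
  forall F, IsFilter (clat L') F ->
    ole (clat L') (clim L' F) (phi (clim L (fun l => F (phi l)))).

Record ConvRaw := { pcar : Type; pconv : ((pcar -> Prop) -> Prop) -> pcar -> Prop }.

Definition dotf (X : Type) (x : X) : (X -> Prop) -> Prop := fun S => S x.

Definition IsConvSpace (X : ConvRaw) :=
  (forall x, pconv X (dotf x) x) /\
  (forall F G x, IsFilter (PowOrd (pcar X)) F -> IsFilter (PowOrd (pcar X)) G ->
     pconv X F x -> Incl F G -> pconv X G x).

Definition imgf (X Y : Type) (f : X -> Y) (F : (X -> Prop) -> Prop) : (Y -> Prop) -> Prop :=
  fun B => F (fun x => B (f x)).

Definition Continuous (X Y : ConvRaw) (f : pcar X -> pcar Y) :=
  forall F x, IsFilter (PowOrd (pcar X)) F -> pconv X F x -> pconv Y (imgf f F) (f x).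

Definition PowConv (X : ConvRaw) : CObjRaw :=
  {| clat := PowOrd (pcar X); clim := fun F x => pconv X F x |}.

Definition one1 : unit -> Prop := fun _ => True.
Definition PowOne : CObjRaw :=
  {| clat := PowOrd unit; clim := fun _ => one1 |}.

Definition ptCar (II JJ : Type -> Prop) (L : CObjRaw) :=
  { phi : ocar (clat L) -> (unit -> Prop) | CconvMor II JJ L PowOne phi }.

Definition bullet (II JJ : Type -> Prop) (L : CObjRaw) (l : ocar (clat L)) :
  ptCar II JJ L -> Prop := fun phi => proj1_sig phi l = one1.

Definition circ (II JJ : Type -> Prop) (L : CObjRaw)
    (F : (ptCar II JJ L -> Prop) -> Prop) : ocar (clat L) -> Prop :=
  fun l => F (@bullet II JJ L l).

Definition ptSpace (II JJ : Type -> Prop) (L : CObjRaw) : ConvRaw :=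
  {| pcar := ptCar II JJ L;
     pconv := fun F phi => @bullet II JJ L (clim L (@circ II JJ L F)) phi |}.

From Stdlib Require Import FunctionalExtensionality PropExtensionality ProofIrrelevance.

Set Implicit Arguments.

(* Infima and suprema in a powerset P(Y) are computed pointwise, so a
   C-morphism L -> P(Y) is the same thing as a Y-indexed family of C-morphisms
   L -> P(1), i.e. of candidate points of L.  Hence a map theta : X -> pt L
   corresponds to Psi(theta) : L -> P(X), l |-> {x | theta x l = 1}, and
   unfolding the definitions shows that continuity of theta and continuity
   of Psi(theta) are literally the same condition.  The only extra work is
   showing that each component of a continuous phi : L -> P(X) is continuous
   into P(1): a filter on P(1) is pushed forward to the point x, where it
   converges since it refines the principal filter of x. *)

Lemma eq_one1 (v : unit -> Prop) : v = one1 <-> v tt.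
Proof.
  split.
  - intros ->. exact I.
  - intros vtt. apply functional_extensionality. intros [].
    apply propositional_extensionality. split; [intros _; exact I | intros _; exact vtt].
Qed.

Lemma eq_one1_eta (A : Type) (v : A -> unit -> Prop) : (fun a (_ : unit) => v a = one1) = v.
Proof.
  apply functional_extensionality. intros a. apply functional_extensionality. intros [].
  apply propositional_extensionality. apply eq_one1.
Qed.

Lemma glb_powE (Y : Type) (S : (Y -> Prop) -> Prop) (m : Y -> Prop) :
  is_glb (PowOrd Y) S m <-> forall y, m y <-> (forall s, S s -> s y).
Proof.
  split.
  - intros [mlb mgreatest] y. split.
    + intros my s Ss. exact (mlb s Ss y my).
    + intros Sy. apply (mgreatest (fun z => z = y)); [|reflexivity].
      intros s Ss z ->. exact (Sy s Ss).
  - intros mE. split.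
    + intros s Ss y my. exact (proj1 (mE y) my s Ss).
    + intros m' m'lb y m'y. apply mE. intros s Ss. exact (m'lb s Ss y m'y).
Qed.

Lemma lub_powE (Y : Type) (S : (Y -> Prop) -> Prop) (m : Y -> Prop) :
  is_lub (PowOrd Y) S m <-> forall y, m y <-> (exists s, S s /\ s y).
Proof.
  split.
  - intros [mub mleast] y. split.
    + apply (mleast (fun z => exists s, S s /\ s z)).
      intros s Ss z sz. exists s. split; assumption.
    + intros [s [Ss sy]]. exact (mub s Ss y sy).
  - intros mE. split.
    + intros s Ss y sy. apply mE. exists s. split; assumption.
    + intros m' m'ub y my. destruct (proj1 (mE y) my) as [s [Ss sy]].
      exact (m'ub s Ss y sy).
Qed.

Lemma range_powE (Y I : Type) (f : I -> Y -> Prop) (y : Y) :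
  (forall s, range (PowOrd Y) f s -> s y) <-> (forall i, f i y).
Proof.
  split.
  - intros H i. apply H. exists i. reflexivity.
  - intros H s [i <-]. apply H.
Qed.

Lemma range_powE_ex (Y I : Type) (f : I -> Y -> Prop) (y : Y) :
  (exists s, range (PowOrd Y) f s /\ s y) <-> (exists i, f i y).
Proof.
  split.
  - intros [s [[i <-] fy]]. exists i. exact fy.
  - intros [i fy]. exists (f i). split; [exists i; reflexivity | exact fy].
Qed.

Section PowersetMorphisms.

Variables (II JJ : Type -> Prop) (L : OrdStruct) (Y : Type).

Lemma PresInf_powE (I : Type) (phi : ocar L -> Y -> Prop) :
  PresInf I L (PowOrd Y) phi <-> forall y, PresInf I L (PowOrd unit) (fun l _ => phi l y).
Proof.
  unfold PresInf. setoid_rewrite glb_powE. setoid_rewrite range_powE.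
  split.
  - intros H y f m mglb _. exact (H f m mglb y).
  - intros H f m mglb y. exact (H y f m mglb tt).
Qed.

Lemma PresSup_powE (J : Type) (phi : ocar L -> Y -> Prop) :
  PresSup J L (PowOrd Y) phi <-> forall y, PresSup J L (PowOrd unit) (fun l _ => phi l y).
Proof.
  unfold PresSup. setoid_rewrite lub_powE. setoid_rewrite range_powE_ex.
  split.
  - intros H y f m mlub _. exact (H f m mlub y).
  - intros H f m mlub y. exact (H y f m mlub tt).
Qed.

Lemma CMor_powE (phi : ocar L -> Y -> Prop) :
  CMor II JJ L (PowOrd Y) phi <->
  forall y, CMor II JJ L (PowOrd unit) (fun l _ => phi l y).
Proof.
  unfold CMor. setoid_rewrite PresInf_powE. setoid_rewrite PresSup_powE.
  split.
  - intros [mono [inf sup]] y. split; [|split].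
    + intros a b ab _. exact (mono a b ab y).
    + intros I II_I. exact (inf I II_I y).
    + intros J JJ_J. exact (sup J JJ_J y).
  - intros H. split; [|split].
    + intros a b ab y. exact (proj1 (H y) a b ab tt).
    + intros I II_I y. exact (proj1 (proj2 (H y)) I II_I).
    + intros J JJ_J y. exact (proj2 (proj2 (H y)) J JJ_J).
Qed.

End PowersetMorphisms.

Lemma IsFilter_top (Y : Type) (F : (Y -> Prop) -> Prop) :
  IsFilter (PowOrd Y) F -> F (fun _ => True).
Proof.
  intros [[a Fa] [Fup _]]. apply (Fup a); [exact Fa | intros y _; exact I].
Qed.

Lemma IsFilter_imgf (X Y : Type) (f : Y -> X) (F : (Y -> Prop) -> Prop) :
  IsFilter (PowOrd Y) F -> IsFilter (PowOrd X) (imgf f F).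
Proof.
  intros Ffil. pose proof (IsFilter_top Ffil) as Ftop. destruct Ffil as [_ [Fup Fmeet]].
  split; [|split].
  - exists (fun _ => True). exact Ftop.
  - intros a b Fa ab. apply (Fup _ _ Fa). intros y. apply ab.
  - intros a b m Fa Fb mglb. apply (Fmeet _ _ _ Fa Fb). rewrite glb_powE in *.
    intros y. rewrite (mglb (f y)).
    split.
    + intros H s [-> | ->]; apply H; [left | right]; reflexivity.
    + intros H s [-> | ->]; [apply (H (fun y => a (f y))) | apply (H (fun y => b (f y)))];
        [left | right]; reflexivity.
Qed.

Lemma IsFilter_dotf (X : Type) (x : X) : IsFilter (PowOrd X) (dotf x).
Proof.
  split; [|split].
  - exists (fun _ => True). exact I.
  - intros a b ax ab. exact (ab x ax).
  - intros a b m ax bx mglb. apply (proj2 (proj1 (glb_powE _ _) mglb x)).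
    intros s [-> | ->]; assumption.
Qed.

Lemma dotf_incl_imgf_const (X Y : Type) (x : X) (F : (Y -> Prop) -> Prop) :
  IsFilter (PowOrd Y) F -> Incl (dotf x) (imgf (fun _ : Y => x) F).
Proof.
  intros Ffil S Sx. pose proof (IsFilter_top Ffil) as Ftop. destruct Ffil as [_ [Fup _]].
  apply (Fup (fun _ => True)); [exact Ftop | intros _ _; exact Sx].
Qed.

Section Transpose.

Variables (II JJ : Type -> Prop) (X : ConvRaw) (L : CObjRaw).

Definition transposePt (theta : pcar X -> ptCar II JJ L) : ocar (clat L) -> pcar X -> Prop :=
  fun l x => proj1_sig (theta x) l = one1.

Lemma CconvMor_transposePt (theta : pcar X -> ptCar II JJ L) :
  CconvMor II JJ L (PowConv X) (transposePt theta) <-> Continuous X (ptSpace II JJ L) theta.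
Proof.
  split.
  - intros [_ lim_cont] F x Ffil Fx. exact (lim_cont F Ffil x Fx).
  - intros theta_cont. split.
    + apply CMor_powE. intros x. unfold transposePt. rewrite eq_one1_eta.
      exact (proj1 (proj2_sig (theta x))).
    + intros F Ffil x Fx. exact (theta_cont F x Ffil Fx).
Qed.

Lemma transposePt_inj (theta1 theta2 : pcar X -> ptCar II JJ L) :
  transposePt theta1 = transposePt theta2 -> theta1 = theta2.
Proof.
  intros E. apply functional_extensionality. intros x.
  apply eq_sig_hprop; [intros; apply proof_irrelevance|].
  rewrite <- (eq_one1_eta (proj1_sig (theta1 x))), <- (eq_one1_eta (proj1_sig (theta2 x))).
  exact (f_equal (fun psi l (_ : unit) => psi l x) E).
Qed.

Hypothesis X_conv : IsConvSpace X.

Lemma CconvMor_component (phi : ocar (clat L) -> pcar X -> Prop) (x : pcar X) :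
  CconvMor II JJ L (PowConv X) phi -> CconvMor II JJ L PowOne (fun l _ => phi l x).
Proof.
  intros [phi_mor phi_cont]. split.
  - exact (proj1 (CMor_powE II JJ (clat L) phi) phi_mor x).
  - intros F Ffil u _.
    assert (Fx : pconv X (imgf (fun _ : unit => x) F) x).
    { destruct X_conv as [dot_conv conv_up].
      apply (conv_up (dotf x)); [apply IsFilter_dotf | apply IsFilter_imgf; exact Ffil
                                | apply dot_conv | apply dotf_incl_imgf_const; exact Ffil]. }
    exact (phi_cont _ (IsFilter_imgf (fun _ : unit => x) Ffil) x Fx).
Qed.

Definition componentPts (phi : ocar (clat L) -> pcar X -> Prop)
    (phi_mor : CconvMor II JJ L (PowConv X) phi) (x : pcar X) : ptCar II JJ L :=
  exist _ (fun l _ => phi l x) (CconvMor_component x phi_mor).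

Lemma transposePt_componentPts (phi : ocar (clat L) -> pcar X -> Prop)
    (phi_mor : CconvMor II JJ L (PowConv X) phi) :
  transposePt (componentPts phi_mor) = phi.
Proof.
  apply functional_extensionality. intros l. apply functional_extensionality. intros x.
  apply propositional_extensionality. apply (eq_one1 (fun _ => phi l x)).
Qed.

Lemma transposePt_surj (phi : ocar (clat L) -> pcar X -> Prop) :
  CconvMor II JJ L (PowConv X) phi ->
  exists theta, Continuous X (ptSpace II JJ L) theta /\ transposePt theta = phi.
Proof.
  intros phi_mor. exists (componentPts phi_mor).
  pose proof (transposePt_componentPts phi_mor) as E.
  split; [|exact E].
  apply CconvMor_transposePt. rewrite E. exact phi_mor.
Qed.

End Transpose.

Theorem mainTheorem1 :
  forall (CObj : OrdStruct -> Prop) (II JJ : Type -> Prop),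
    (forall X : Type, CObj (PowOrd X)) ->
    (forall L, CObj L -> IsLattice L) ->
    (forall L L' (phi : ocar L -> ocar L'),
        CObj L -> CObj L' -> CMor II JJ L L' phi -> PresFinInfSup L L' phi) ->
    exists Psi : forall (X : ConvRaw) (L : CObjRaw),
        (pcar X -> ptCar II JJ L) -> ocar (clat L) -> pcar X -> Prop,
      (* Psi_{X,L} is a bijection Conv(X, pt L) -> C^conv(L, P X) *)
      (forall X L, IsConvSpace X -> IsConvCObj CObj L ->
         (forall theta, Continuous X (ptSpace II JJ L) theta ->
            CconvMor II JJ L (PowConv X) (Psi X L theta)) /\
         (forall theta1 theta2,
            Continuous X (ptSpace II JJ L) theta1 ->
            Continuous X (ptSpace II JJ L) theta2 ->
            Psi X L theta1 = Psi X L theta2 -> theta1 = theta2) /\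
         (forall phi, CconvMor II JJ L (PowConv X) phi ->
            exists theta, Continuous X (ptSpace II JJ L) theta /\ Psi X L theta = phi)) /\
      (* naturality in X : Psi(theta o f) = P f o Psi(theta), with P f = f^{-1} *)
      (forall X X' L, IsConvSpace X -> IsConvSpace X' -> IsConvCObj CObj L ->
         forall f : pcar X' -> pcar X, Continuous X' X f ->
         forall theta, Continuous X (ptSpace II JJ L) theta ->
           Psi X' L (fun x' => theta (f x')) = (fun l x' => Psi X L theta l (f x'))) /\
      (* naturality in L : Psi(pt psi o theta) = Psi(theta) o psi, with pt psi (chi) = chi o psi *)
      (forall X L L', IsConvSpace X -> IsConvCObj CObj L -> IsConvCObj CObj L' ->
         forall psi : ocar (clat L') -> ocar (clat L), CconvMor II JJ L' L psi ->
         forall (theta : pcar X -> ptCar II JJ L) (theta' : pcar X -> ptCar II JJ L'),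
           Continuous X (ptSpace II JJ L) theta ->
           Continuous X (ptSpace II JJ L') theta' ->
           (forall x, proj1_sig (theta' x) = (fun l => proj1_sig (theta x) (psi l))) ->
           Psi X L' theta' = (fun l => Psi X L theta (psi l))).
Proof.
  intros CObj II JJ _ _ _.
  exists (@transposePt II JJ).
  split; [|split].
  - intros X L X_conv _. split; [|split].
    + intros theta. apply CconvMor_transposePt.
    + intros theta1 theta2 _ _. apply transposePt_inj.
    + apply transposePt_surj. exact X_conv.
  - reflexivity.
  - intros X L L' _ _ _ psi _ theta theta' _ _ theta'E. unfold transposePt.
    apply functional_extensionality. intros l. apply functional_extensionality. intros x.
    rewrite theta'E. reflexivity.
Qed.
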